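(* Let $H$ be a traceless hermitian $5\times 5$ matrix with pairwise distinct eigenvalues $\lambda_1,\dots,\lambda_5$, let $C(z)=\prod_{k=1}^5(z-\lambda_k)$, and let $F_5(t)=\sum_{k=1}^5 \exp(i\lambda_k t)/C'(\lambda_k)$. Then for all real $t$, $$\exp(itH)=\Big[H^4-iH^3\frac{d}{dt}-H^2\Big(\tfrac12\operatorname{tr}(H^2)+\frac{d^2}{dt^2}\Big)+H\Big(-\tfrac13\operatorname{tr}(H^3)+\tfrac12 i\operatorname{tr}(H^2)\frac{d}{dt}+i\frac{d^3}{dt^3}\Big)$$ $$+I\Big(\tfrac18(\operatorname{tr}(H^2))^2-\tfrac14\operatorname{tr}(H^4)+\tfrac13\operatorname{tr}(H^3)\,i\frac{d}{dt}+\tfrac12\operatorname{tr}(H^2)\frac{d^2}{dt^2}+\frac{d^4}{dt^4}\Big)\Big]F_5(t).$$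
   Context: $I$ is the $5\times5$ identity matrix; a matrix coefficient multiplying a differential operator means the operator is applied to $F_5(t)$ and the result multiplies the matrix. *)

From HB Require Import structures.
From mathcomp Require Import all_boot all_order all_algebra.
From mathcomp Require Import all_classical all_reals all_analysis.
From mathcomp Require Import complex.
Set Implicit Arguments. Unset Strict Implicit. Unset Printing Implicit Defensive.
Import Order.TTheory GRing.Theory Num.Theory.
Import numFieldNormedType.Exports.
Local Open Scope ring_scope.
Local Open Scope complex_scope.
Local Open Scope classical_set_scope.

(* the complex numbers R[i], packaged as a numClosedFieldType so that the
   generic topology/normed structure of MathComp-Analysis applies *)
Definition Cpx (R : realType) : numClosedFieldType := R[i].

Definition cexp (R : realType) (z : Cpx R) : Cpx R :=
  lim ((fun N : nat => \sum_(k < N) (k`!%:R)^-1 * z ^+ k) @ \oo).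

Definition expm (R : realType) (n : nat) (M : 'M[Cpx R]_n.+1) : 'M[Cpx R]_n.+1 :=
  \matrix_(a, b) lim ((fun N : nat => (\sum_(k < N) (k`!%:R)^-1 *: M ^+ k) a b) @ \oo).

Definition cderiv (R : realType) (f : R -> Cpx R) : R -> Cpx R :=
  fun t => lim ((fun h : R => (f (t + h) - f t) / (h%:C : Cpx R)) @ 0^').

Definition cderivn (R : realType) (n : nat) (f : R -> Cpx R) : R -> Cpx R :=
  iter n (@cderiv R) f.

Definition hermitian_mx (R : realType) (n : nat) (H : 'M[Cpx R]_n) : Prop :=
  forall a b, H b a = (H a b)^*.

Definition charC (R : realType) (lam : 'I_5 -> Cpx R) : {poly Cpx R} :=
  \prod_(k < 5) ('X - (lam k)%:P).

Definition F5 (R : realType) (lam : 'I_5 -> Cpx R) (t : R) : Cpx R :=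
  \sum_(k < 5) cexp ('i * lam k * t%:C) / ((charC lam)^`()).[lam k].

From HB Require Import structures.
From mathcomp Require Import all_boot all_order all_algebra.
From mathcomp Require Import all_classical all_reals all_analysis.
From mathcomp Require Import complex.
From mathcomp Require Import ring.
Set Implicit Arguments.
Unset Strict Implicit.
Unset Printing Implicit Defensive.
Import Order.TTheory GRing.Theory Num.Theory.
Import numFieldNormedType.Exports.
Local Open Scope ring_scope.
Local Open Scope complex_scope.
Local Open Scope classical_set_scope.

(** Since [H] is hermitian with distinct eigenvalues [lam k], it is diagonalisable
    with real spectrum, [H ^+ m = \sum_k lam k ^+ m *: P k] for projections [P k]
    of trace 1; so [tr (H ^+ m)] are the power sums of the [lam k], and both sides
    of the identity are combinations of the [P k]. The coefficient on the left is
    [exp (i lam_k t)]. On the right, [d/dt] multiplies the [j]-th exponential of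
    [F_5] by [i lam_j], and by Newton's identities (with [tr H = 0]) the
    coefficient becomes [\sum_j exp (i lam_j t) / C'(lam_j) * Q (lam_j, lam_k)],
    where [Q (y, x) = (C x - C y) / (x - y)]. As [Q (lam_j, lam_k)] vanishes for
    [j != k] and equals [C'(lam_k)] for [j = k], this is [exp (i lam_k t)]. *)

Lemma mulmx_prod_subm_eigen (F : fieldType) (n : nat) (H : 'M[F]_n.+1) (v : 'rV_n.+1)
    (a : F) (hv : v *m H = a *: v) (I : Type) (r : seq I) (P : pred I) (c : I -> F) :
  v *m \prod_(i <- r | P i) (H - (c i)%:M) = (\prod_(i <- r | P i) (a - c i)) *: v.
Proof.
elim: r => [|i r IH]; first by rewrite !big_nil mulmx1 scale1r.
rewrite !big_cons; case: (P i) => //.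
rewrite -mulmxE mulmxA mulmxBr hv mul_mx_scalar -scalerBl -scalemxAl IH.
by rewrite scalerA.
Qed.

Lemma prod_sub_neq0 (F : idomainType) (I : finType) (l : I -> F) (k : I) :
  injective l -> \prod_(i | i != k) (l k - l i) != 0.
Proof.
move=> linj; rewrite prodf_seq_neq0; apply/allP => i _; apply/implyP => hik.
by rewrite subr_eq0; apply: contra hik => /eqP /linj ->.
Qed.

Lemma eigenvectors_unitmx (F : fieldType) (n : nat) (H : 'M[F]_n.+1)
    (lam : 'I_n.+1 -> F) (v : 'I_n.+1 -> 'rV_n.+1) :
  injective lam -> (forall k, v k *m H = lam k *: v k) -> (forall k, v k != 0) ->
  \matrix_k v k \in unitmx.
Proof.
move=> linj hv hv0; rewrite unitmxE unitfE; apply/negP => /det0P [u u0 hu].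
apply/negP: u0; rewrite negbK; apply/eqP/rowP => j; rewrite mxE.
pose Pj := \prod_(i < n.+1 | i != j) (H - (lam i)%:M).
(* [Pj] kills every eigenvector but the [j]-th one. *)
have := congr1 (mulmx^~ Pj) hu; rewrite mul0mx [u *m _]mulmx_sum_row mulmx_suml.
rewrite (bigD1 j) //= big1 ?addr0 => [|k hk]; last first.
  rewrite rowK -scalemxAl (mulmx_prod_subm_eigen (hv k)) (bigD1 k) //=.
  by rewrite subrr mul0r scale0r scaler0.
rewrite (rowK v j) -scalemxAl (mulmx_prod_subm_eigen (hv j)) scalerA => /eqP.
rewrite scaler_eq0 (negbTE (hv0 j)) orbF mulf_eq0 => /orP[/eqP //|].
by rewrite (negbTE (prod_sub_neq0 j linj)).
Qed.

Lemma mulmx_sum_col_row (R : pzSemiRingType) (m n p : nat)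
    (A : 'M[R]_(m, n)) (B : 'M[R]_(n, p)) :
  \sum_k col k A *m row k B = A *m B.
Proof.
apply/matrixP => i j; rewrite summxE !mxE; apply: eq_bigr => k _.
by rewrite !mxE big_ord1 !mxE.
Qed.

Lemma mxtrace_col_mul_row (R : comPzRingType) (m n : nat)
    (A : 'M[R]_(m, n)) (B : 'M[R]_(n, m)) k :
  \tr (col k A *m row k B) = (B *m A) k k.
Proof.
rewrite mxtrace_mulC /mxtrace big_ord1 !mxE; apply: eq_bigr => j _.
by rewrite !mxE.
Qed.

Lemma eigen_decomposition (F : fieldType) (n : nat) (H : 'M[F]_n.+1)
    (lam : 'I_n.+1 -> F) :
  injective lam -> (forall k, eigenvalue H (lam k)) ->
  exists P : 'I_n.+1 -> 'M[F]_n.+1,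
    (forall m, H ^+ m = \sum_k lam k ^+ m *: P k) /\ (forall k, \tr (P k) = 1).
Proof.
move=> linj heig.
have [v hvH hv0] := fin_all_exists2 (fun k => elimT eigenvalueP (heig k)).
pose W := \matrix_k v k.
have Wu : W \in unitmx by apply: eigenvectors_unitmx hvH hv0.
exists (fun k => col k (invmx W) *m row k W); split => [m|k]; last first.
  by rewrite mxtrace_col_mul_row mulmxV // mxE eqxx.
rewrite -[H ^+ m]mul1mx -(mulVmx Wu) -(mulmx_sum_col_row (invmx W)) mulmx_suml.
apply: eq_bigr => k _; rewrite -mulmxA scalemxAr; congr (_ *m _).
elim: m => [|m IH]; first by rewrite expr0 mulmx1 scale1r.
by rewrite exprSr -mulmxE mulmxA IH -scalemxAl rowK hvH scalerA -exprSr.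
Qed.

Lemma mxtrace_exprm_spectral (F : comPzRingType) (n : nat) (H : 'M[F]_n)
    (I : finType) (lam : I -> F) (P : I -> 'M[F]_n) :
  (forall m, H ^+ m = \sum_k lam k ^+ m *: P k) -> (forall k, \tr (P k) = 1) ->
  forall m, \tr (H ^+ m) = \sum_k lam k ^+ m.
Proof.
move=> hP htr m; rewrite hP raddf_sum /=; apply: eq_bigr => k _.
by rewrite mxtraceZ htr mulr1.
Qed.

Lemma quartic_spectral (F : comPzRingType) (n : nat) (H : 'M[F]_n.+1)
    (I : finType) (lam : I -> F) (P : I -> 'M[F]_n.+1)
    (hP : forall m, H ^+ m = \sum_k lam k ^+ m *: P k) (c4 c3 c2 c1 c0 : F) :
  c4 *: H ^+ 4 - c3 *: H ^+ 3 - c2 *: H ^+ 2 + c1 *: H + c0 *: 1%:M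
  = \sum_k (c4 * lam k ^+ 4 - c3 * lam k ^+ 3 - c2 * lam k ^+ 2
            + c1 * lam k + c0) *: P k.
Proof.
rewrite -[H in c1 *: H]expr1 -[1%:M]/(H ^+ 0) !hP !scaler_sumr.
rewrite -!sumrB -!big_split /=; apply: eq_bigr => k _.
by rewrite !scalerA !(scalerDl, scalerBl) expr0 expr1 mulr1 !scaleNr.
Qed.

Local Notation o i := (@Ordinal 5 i isT).

Lemma big_ord5 (R : Type) (idx : R) (op : Monoid.law idx) (P : pred 'I_5)
    (F : 'I_5 -> R) :
  let G i := if P i then F i else idx in
  \big[op/idx]_(i < 5 | P i) F i
  = op (op (op (op (G (o 0)) (G (o 1))) (G (o 2))) (G (o 3))) (G (o 4)).
Proof.
rewrite big_mkcond !big_ord_recr big_ord0 Monoid.mul1m /=.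
by congr (op (op (op (op _ _) _) _) _); congr (if P _ then F _ else _); apply: val_inj.
Qed.

(* [divdiff5 p2 p3 p4 y x = (C x - C y) / (x - y)] for the quintic
   [C z = z^5 - p2/2 z^3 - p3/3 z^2 + (p2^2/8 - p4/4) z + c] whose roots have
   sum 0 and power sums [p2, p3, p4] (Newton's identities). *)
Definition divdiff5 (K : fieldType) (p2 p3 p4 y x : K) : K :=
  x ^+ 4 + y * x ^+ 3 + (y ^+ 2 - p2 / 2%:R) * x ^+ 2
  + (y ^+ 3 - p2 / 2%:R * y - p3 / 3%:R) * x
  + (p2 ^+ 2 / 8%:R - p4 / 4%:R - p3 / 3%:R * y - p2 / 2%:R * y ^+ 2 + y ^+ 4).

Section DividedDifference.

Variables (K : numFieldType) (l : 'I_5 -> K).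
Hypothesis l_sum0 : \sum_i l i = 0.

Local Notation Q := (divdiff5 (\sum_i l i ^+ 2) (\sum_i l i ^+ 3) (\sum_i l i ^+ 4)).

Let l4E : l (o 4) = - (l (o 0) + l (o 1) + l (o 2) + l (o 3)).
Proof.
by apply/eqP; rewrite -subr_eq0 opprK; apply/eqP; rewrite -l_sum0 big_ord5 /=; ring.
Qed.

Lemma divdiff5E x y : Q y x * (x - y) = \prod_i (x - l i) - \prod_i (y - l i).
Proof. by rewrite /divdiff5 !big_ord5 /= l4E; field. Qed.

Lemma divdiff5_diag x : Q x x = \sum_j \prod_(i | i != j) (x - l i).
Proof. by rewrite /divdiff5 !big_ord5 /= l4E; field. Qed.

Lemma divdiff5_interpolation (w : 'I_5 -> K) k : injective l ->
  \sum_j w j * Q (l j) (l k) = w k * \prod_(i | i != k) (l k - l i).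
Proof.
move=> linj; rewrite (bigD1 k) //= [X in _ + X]big1 ?addr0 => [|j hj].
  rewrite divdiff5_diag (bigD1 k) //= [X in _ + X]big1 ?addr0 // => j hj.
  rewrite (bigD1 k) /=; last by rewrite eq_sym.
  by rewrite subrr mul0r.
have hne : l k - l j != 0 by rewrite subr_eq0 (inj_eq linj) eq_sym.
have hroot m : \prod_i (l m - l i) = 0 by rewrite (bigD1 m) //= subrr mul0r.
have := divdiff5E (l k) (l j); rewrite !hroot subrr => /eqP.
by rewrite mulf_eq0 (negbTE hne) orbF => /eqP ->; rewrite mulr0.
Qed.

End DividedDifference.

Lemma divdiff5_symbol (K : numClosedFieldType) (l w : 'I_5 -> K) (D : nat -> K)
    (hD : forall m, D m = \sum_j w j * ('i * l j) ^+ m) (p2 p3 p4 x : K) :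
  D 0%N * x ^+ 4 - ('i * D 1%N) * x ^+ 3 - (p2 / 2%:R * D 0%N + D 2%N) * x ^+ 2
  + (- (p3 / 3%:R) * D 0%N + 2%:R^-1 * 'i * p2 * D 1%N + 'i * D 3%N) * x
  + (p2 ^+ 2 / 8%:R * D 0%N - p4 / 4%:R * D 0%N + p3 / 3%:R * 'i * D 1%N
     + p2 / 2%:R * D 2%N + D 4%N)
  = \sum_j w j * divdiff5 p2 p3 p4 (l j) x.
Proof.
pose A m := \sum_j w j * l j ^+ m.
(* Both sides agree as polynomials in ['i] modulo ['i ^+ 2 + 1]. *)
transitivity (\sum_j w j * divdiff5 p2 p3 p4 (l j) x + ('i ^+ 2 + 1) *
  (- A 1%N * x ^+ 3 - A 2%N * x ^+ 2 + (('i ^+ 2 - 1) * A 3%N + p2 / 2%:R * A 1%N) * x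
   + p3 / 3%:R * A 1%N + p2 / 2%:R * A 2%N + ('i ^+ 2 - 1) * A 4%N)).
  by rewrite !hD /A /divdiff5 !big_ord5 /=; ring.
by rewrite sqrCi addNr mul0r addr0.
Qed.

Lemma deriv_prod_XsubC_root (R : comNzRingType) (I : finType) (l : I -> R) (k : I) :
  (\prod_i ('X - (l i)%:P))^`().[l k] = \prod_(i | i != k) (l k - l i).
Proof.
rewrite (bigD1 k) //= derivM derivXsubC mul1r hornerD hornerM hornerXsubC subrr.
by rewrite mul0r addr0 horner_prod; apply: eq_bigr => i _; rewrite hornerXsubC.
Qed.

Lemma hermitian_eigenvalue_real (R : rcfType) (n : nat) (H : 'M[R[i]]_n) (a : R[i]) :
  (forall x y, H y x = (H x y)^*) -> eigenvalue H a -> a = (complex.Re a)%:C.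
Proof.
move=> hH /eigenvalueP [v hv v0].
pose N := \sum_b v 0 b * (v 0 b)^*.
pose S := \sum_b \sum_c v 0 c * H c b * (v 0 b)^*.
have SE : S = a * N.
  rewrite /S /N big_distrr; apply: eq_bigr => b _.
  have := congr1 (fun M : 'rV_n => M 0 b) hv; rewrite !mxE => e.
  by rewrite -big_distrl /= e mulrA.
have S_real : S^* = S.
  rewrite /S rmorph_sum; under eq_bigr do rewrite rmorph_sum.
  rewrite exchange_big; apply: eq_bigr => b _; apply: eq_bigr => c _.
  by rewrite !rmorphM /= conjcK -hH; ring.
have N_real : N^* = N.
  by rewrite /N rmorph_sum; apply: eq_bigr => b _; rewrite rmorphM /= conjcK mulrC.
have N0 : N != 0.
  apply: contra v0 => /eqP /(psumr_eq0P (fun b _ => mulcJ_ge0 _)) vv0.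
  apply/eqP/rowP => b; rewrite mxE.
  by have /eqP := vv0 b isT; rewrite mulf_eq0 conjc_eq0 orbb => /eqP.
have a_real : a^* = a.
  by apply: (mulIf N0); rewrite -[in LHS]N_real -rmorphM /= -SE S_real SE.
by rewrite ReJ_add a_real; field.
Qed.

Lemma sqrtr_sqrD_le_normD (R : rcfType) (a b : R) :
  Num.sqrt (a ^+ 2 + b ^+ 2) <= `|a| + `|b|.
Proof.
have ab_ge0 : 0 <= `|a| + `|b| by rewrite addr_ge0.
have sqrt_sqrE : Num.sqrt ((`|a| + `|b|) ^+ 2) = `|a| + `|b|.
  by rewrite sqrtr_sqr ger0_norm.
rewrite -[leRHS]sqrt_sqrE ler_sqrt ?sqr_ge0 //.
rewrite sqrrD !real_normK ?num_real // -addrA lerD2l lerDr.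
by rewrite mulrn_wge0 // mulr_ge0.
Qed.

Lemma cvg_ReIm (R : realType) (T : Type) (F : set_system T) (FF : Filter F)
    (f : T -> Cpx R) (l : Cpx R) :
  (fun x => complex.Re (f x)) @ F --> complex.Re l ->
  (fun x => complex.Im (f x)) @ F --> complex.Im l ->
  f @ F --> l.
Proof.
move=> /cvgrPdist_lt hre /cvgrPdist_lt him; apply/cvgrPdist_lt => e e0.
have : (0 : Cpx R) < e := e0.
rewrite ltcE => /andP[/eqP e_real e_pos].
have e2_pos : 0 < complex.Re e / 2 by rewrite divr_gt0.
have -> : e = (complex.Re e)%:C by case: e {e0 e2_pos e_pos} e_real => a b /= ->.
near=> x; rewrite normc_def ltcR /=.
apply: le_lt_trans (sqrtr_sqrD_le_normD _ _) _.
rewrite (splitr (complex.Re e)) ltrD // raddfB /=; near: x.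
  exact: hre.
exact: him.
Unshelve. all: end_near. Qed.

Lemma expr_iR (R : realType) (y : R) k :
  ('i * y%:C : Cpx R) ^+ k =
  ((~~ odd k)%:R * (-1) ^+ k./2 * y ^+ k) +i* ((odd k)%:R * (-1) ^+ k.-1./2 * y ^+ k).
Proof.
elim: k => [|k IH].
  by rewrite expr0; apply/eqP; rewrite eq_complex /= !mul1r !mul0r !eqxx.
rewrite exprS IH.
have -> : ('i * y%:C : Cpx R) = ((0 : R) +i* y).
  by apply/eqP; rewrite eq_complex /= !mul0r !mul1r subr0 add0r !eqxx.
simpc; apply/eqP; rewrite eq_complex /=; apply/andP; split; apply/eqP.
  rewrite negbK; case: k {IH} => [|k] /=; first by rewrite !mul0r !mulr0 oppr0.
  case: (odd k) => /=; rewrite ?mul0r ?mul1r ?mulr0 ?oppr0 //.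
  by rewrite [(-1) ^+ _.+1]exprS [y ^+ _.+2]exprS; ring.
by rewrite exprS; ring.
Qed.

Lemma exp_coeff_iR (R : realType) (y : R) k :
  (k`!%:R : Cpx R)^-1 * ('i * y%:C) ^+ k = (cos_coeff y k) +i* (sin_coeff y k).
Proof.
have -> : (k`!%:R : Cpx R)^-1 = ((k`!%:R : R)^-1)%:C by rewrite fmorphV rmorph_nat.
by rewrite expr_iR; simpc; apply/eqP; rewrite eq_complex /cos_coeff /sin_coeff /= -!exprnP !(mulrC _^-1) !eqxx.
Qed.

Lemma cvg_exp_series_iR (R : realType) (y : R) :
  (fun N : nat => \sum_(k < N) (k`!%:R : Cpx R)^-1 * ('i * y%:C) ^+ k) @ \oo
    --> ((cos y +i* sin y) : Cpx R).
Proof.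
have part_series (f : {additive Cpx R -> R}) (a : nat -> R) :
    (forall k, f ((k`!%:R)^-1 * ('i * y%:C) ^+ k) = a k) ->
    (fun N : nat => f (\sum_(k < N) (k`!%:R : Cpx R)^-1 * ('i * y%:C) ^+ k))
    = series a.
  move=> fa; apply/funext => N; rewrite /series /= big_mkord raddf_sum.
  by apply: eq_bigr => k _.
apply: cvg_ReIm => /=.
  rewrite (part_series (@complex.Re R : {additive Cpx R -> R}) (cos_coeff y)) => [|k]; last by rewrite exp_coeff_iR.
  by rewrite unlock; exact: is_cvg_series_cos_coeff.
rewrite (part_series (@complex.Im R : {additive Cpx R -> R}) (sin_coeff y)) => [|k]; last by rewrite exp_coeff_iR.
by rewrite unlock; exact: is_cvg_series_sin_coeff.
Qed.

Lemma cexp_iR (R : realType) (y : R) : cexp ('i * y%:C) = ((cos y +i* sin y) : Cpx R).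
Proof. by apply: cvg_lim; [exact: norm_hausdorff | exact: cvg_exp_series_iR]. Qed.

Lemma cexp_iRM (R : realType) (mu s : R) :
  cexp ('i * mu%:C * s%:C : Cpx R) = ((cos (mu * s) +i* sin (mu * s)) : Cpx R).
Proof. by rewrite -mulrA -rmorphM cexp_iR. Qed.

Lemma is_derive_cvg_quotient (R : realType) (f : R -> R) (t df : R) :
  is_derive t 1 f df -> (fun h : R => (f (t + h) - f t) / h) @ 0^' --> df.
Proof.
move=> f'; have Df : 'D_1 f t = df by apply: derive_val.
have : (fun h : R => h^-1 *: ((f \o shift t) (h *: 1) - f t)) @ 0^' --> df.
  by rewrite -Df; exact: (@ex_derive _ _ _ _ _ _ _ f').
apply: cvg_trans; apply: near_eq_cvg; near=> h.
by rewrite /= -[h%:A]/(h * 1) mulr1 -[h^-1 *: _]/(h^-1 * _) [h + t]addrC mulrC.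
Unshelve. all: end_near. Qed.

Lemma is_derive_scale (R : realType) (mu t : R) : is_derive t 1 (fun s : R => mu * s) mu.
Proof.
have -> : (fun s : R => mu * s) = mu \*: id by apply/funext.
by apply: is_derive_eq (is_deriveZ mu (is_derive_id t 1)) _; rewrite -[mu *: 1]/(mu * 1) mulr1.
Qed.

Lemma is_derive_cos_scale (R : realType) (mu t : R) :
  is_derive t 1 (fun s : R => cos (mu * s)) (- (mu * sin (mu * t))).
Proof.
have := is_derive1_comp (@is_derive_cos R (mu * t)) (is_derive_scale mu t).
by move/is_derive_eq; apply; rewrite mulNr mulrC.
Qed.

Lemma is_derive_sin_scale (R : realType) (mu t : R) :
  is_derive t 1 (fun s : R => sin (mu * s)) (mu * cos (mu * t)).
Proof.
have := is_derive1_comp (@is_derive_sin R (mu * t)) (is_derive_scale mu t).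
by move/is_derive_eq; apply; rewrite mulrC.
Qed.

Lemma cvg_cexp_iR_quotient (R : realType) (mu t : R) :
  (fun h : R => (cexp ('i * mu%:C * (t + h)%:C) - cexp ('i * mu%:C * t%:C)) / h%:C)
     @ 0^' --> ('i * mu%:C * cexp ('i * mu%:C * t%:C) : Cpx R).
Proof.
have divRE (w : Cpx R) (h : R) :
    w / h%:C = (complex.Re w / h) +i* (complex.Im w / h).
  by rewrite -fmorphV; case: w => a b; simpc; rewrite mulrC [b * _]mulrC.
rewrite cexp_iRM; apply: cvg_ReIm => /=; under eq_fun do rewrite divRE !cexp_iRM /=.
  by simpc; exact: is_derive_cvg_quotient (is_derive_cos_scale mu t).
by simpc; exact: is_derive_cvg_quotient (is_derive_sin_scale mu t).
Qed.

Definition expsum (R : realType) (I : finType) (mu : I -> R) (a : I -> Cpx R) (t : R) :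
  Cpx R := \sum_k cexp ('i * (mu k)%:C * t%:C) * a k.

Lemma cderiv_expsum (R : realType) (I : finType) (mu : I -> R) (a : I -> Cpx R) :
  cderiv (expsum mu a) = expsum mu (fun k => a k * ('i * (mu k)%:C)).
Proof.
apply/funext => t; apply: cvg_lim; first exact: norm_hausdorff.
have -> : (fun h : R => (expsum mu a (t + h) - expsum mu a t) / h%:C) =
    (fun h : R => \sum_k (cexp ('i * (mu k)%:C * (t + h)%:C)
                          - cexp ('i * (mu k)%:C * t%:C)) / h%:C * a k).
  apply/funext => h; rewrite /expsum -sumrB big_distrl /=.
  by apply: eq_bigr => k _; rewrite -mulrBl mulrAC.
rewrite /expsum; under eq_bigr do rewrite mulrA mulrC mulrA.
apply: cvg_big => [|k _]; first exact: add_continuous.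
by apply: cvgMl; exact: cvg_cexp_iR_quotient.
Qed.

Lemma cderivn_expsum (R : realType) (I : finType) (mu : I -> R) (a : I -> Cpx R) n :
  cderivn n (expsum mu a) = expsum mu (fun k => a k * ('i * (mu k)%:C) ^+ n).
Proof.
elim: n => [|n IH].
  by congr expsum; apply/funext => k; rewrite expr0 mulr1.
rewrite [LHS]/cderivn iterS -/(cderivn n _) IH cderiv_expsum.
by congr expsum; apply/funext => k; rewrite exprSr [RHS]mulrA.
Qed.

Lemma expm_spectral (R : realType) (n : nat) (H : 'M[Cpx R]_n.+1) (I : finType)
    (mu : I -> R) (P : I -> 'M[Cpx R]_n.+1)
    (hP : forall m, H ^+ m = \sum_k (mu k)%:C ^+ m *: P k) (t : R) :
  expm (('i * t%:C) *: H) = \sum_k cexp ('i * (mu k)%:C * t%:C) *: P k.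
Proof.
apply/matrixP => a b; rewrite mxE summxE.
apply: cvg_lim; first exact: norm_hausdorff.
have -> : (fun N : nat => (\sum_(m < N) (m`!%:R)^-1 *: (('i * t%:C) *: H) ^+ m) a b)
    = (fun N => \sum_k (\sum_(m < N) (m`!%:R : Cpx R)^-1 * ('i * (mu k * t)%:C) ^+ m)
                       * P k a b).
  apply/funext => N; rewrite summxE.
  transitivity (\sum_(m < N) \sum_k (m`!%:R : Cpx R)^-1 * ('i * (mu k * t)%:C) ^+ m
                                       * P k a b).
    apply: eq_bigr => m _; rewrite exprZn hP !mxE summxE !big_distrr /=.
    by apply: eq_bigr => k _; rewrite !mxE rmorphM /= !exprMn; ring.
  by rewrite exchange_big /=; apply: eq_bigr => k _; rewrite big_distrl.
apply: cvg_big => [|k _]; first exact: add_continuous.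
by rewrite mxE cexp_iRM; apply: cvgMl; exact: cvg_exp_series_iR.
Qed.

Theorem mainTheorem3 (R : realType) (H : 'M[Cpx R]_5) (lam : 'I_5 -> Cpx R)
  (hH : hermitian_mx H) (htr : \tr H = 0)
  (hinj : injective lam) (heig : forall k, eigenvalue H (lam k)) (t : R) :
  let F := F5 lam in
  let D (n : nat) := cderivn n F t in
  let tr2 := \tr (H ^+ 2) in
  let tr3 := \tr (H ^+ 3) in
  let tr4 := \tr (H ^+ 4) in
  expm (('i * (t%:C : Cpx R)) *: H) =
      D 0 *: H ^+ 4
    - ('i * D 1) *: H ^+ 3
    - (tr2 / 2%:R * D 0 + D 2) *: H ^+ 2
    + (- (tr3 / 3%:R) * D 0 + 2%:R^-1 * 'i * tr2 * D 1 + 'i * D 3) *: H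
    + (tr2 ^+ 2 / 8%:R * D 0 - tr4 / 4%:R * D 0 + tr3 / 3%:R * 'i * D 1
       + tr2 / 2%:R * D 2 + D 4) *: (1%:M : 'M[Cpx R]_5).
Proof.
move=> F D tr2 tr3 tr4.
have [P [hP trP]] := eigen_decomposition hinj heig.
have lam_real k : lam k = (complex.Re (lam k))%:C.
  exact: hermitian_eigenvalue_real hH (heig k).
have trE m : \tr (H ^+ m) = \sum_k lam k ^+ m := mxtrace_exprm_spectral hP trP m.
have lam_sum0 : \sum_k lam k = 0.
  by rewrite -[RHS]htr -[H]expr1 trE; apply: eq_bigr => k _; rewrite expr1.
pose d k := ((charC lam)^`()).[lam k].
have FE : F = expsum (fun j => complex.Re (lam j)) (fun j => (d j)^-1).
  by apply/funext => s; rewrite /F /F5 /expsum; apply: eq_bigr => j _; rewrite -lam_real.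
have DE m : D m = \sum_j (cexp ('i * lam j * t%:C) / d j) * ('i * lam j) ^+ m.
  by rewrite /D FE cderivn_expsum /expsum; apply: eq_bigr => j _; rewrite -lam_real mulrA.
have hPR m : H ^+ m = \sum_k (complex.Re (lam k))%:C ^+ m *: P k.
  by rewrite hP; apply: eq_bigr => k _; rewrite -lam_real.
rewrite (expm_spectral hPR).
rewrite (quartic_spectral hP) /tr2 /tr3 /tr4 !trE; apply: eq_bigr => k _.
rewrite (divdiff5_symbol DE) divdiff5_interpolation // -lam_real.
rewrite /d /charC -deriv_prod_XsubC_root mulfVK //.
by rewrite deriv_prod_XsubC_root prod_sub_neq0.
Qed.
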